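(* The universal group functor $\mathrm{Gr}\colon\mathbf{EA}\to\mathbf{POG}_u$ is a strong monoidal functor from $(\mathbf{EA},\otimes,\underline2)$ to $(\mathbf{POG}_u,\otimes,(\mathbb{Z},1))$, with structure morphism $\epsilon\colon(\mathbb{Z},1)\to\mathrm{Gr}(\underline2)$ the unique morphism, and with natural isomorphisms $\mu_{E,F}\colon\mathrm{Gr}(E)\otimes\mathrm{Gr}(F)\to\mathrm{Gr}(E\otimes F)$ given on generators by $[x]\otimes[y]\mapsto[x\otimes y]$.
   Context: $\mathbf{EA}$: category of effect algebras (partial algebras $(E;\oplus,',0,1)$ with $\oplus$ commutative and associative as Kleene identities, $a\oplus b=1$ iff $b=a'$, $a\oplus1$ defined iff $a=0$) and homomorphisms preserving existing orthosums and $1$. It is monoidal with tensor product $E\otimes F$ (universal for bihomomorphisms: maps preserving existing orthosums in each variable with $(1,1)\mapsto1$) and unit $\underline2=\{0,1\}$. $\mathbf{POG}_u$: Abelian po-groups with order unit (an element $u\ge0$ such that every $x\le nu$ for some $n$), morphisms order-preserving unit-preserving group homomorphisms; monoidal with $(A,u)\otimes(B,v)=(A\otimes B,u\otimes v)$ (Abelian group tensor product, positive cone generated by $a\otimes b$, $a\in A^+,b\in B^+$) and unit $(\mathbb{Z},1)$. For $w\ge0$, $\Gamma(B,w)=[0,w]$ with $x\oplus y=x+y$ when $x+y\le w$. The universal group $(\mathrm{Gr}(E),u)$ of $E$ comes with $\eta_E\colon E\to\Gamma(\mathrm{Gr}(E),u)$ such that every effect algebra homomorphism $E\to\Gamma(B,w)$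 is $\Gamma(g)\circ\eta_E$ for a unique order-preserving group homomorphism $g$ with $g(u)=w$; $[x]$ denotes $\eta_E(x)$ as an element of $\mathrm{Gr}(E)$. A strong monoidal functor is a functor with an isomorphism $\epsilon$ from the unit to the image of the unit and a natural isomorphism $\mu$ from $F(-)\otimes F(-)$ to $F(-\otimes-)$ satisfying the standard associativity and unitality coherence conditions. *)

(* Effect algebras, po-groups with order unit, and the
   universal constructions (EA tensor product, universal group, tensor product
   of unital po-groups) are encoded through their universal properties. *)
From HB Require Import structures.
From mathcomp Require Import all_boot all_order all_algebra.
Set Implicit Arguments. Unset Strict Implicit. Unset Printing Implicit Defensive.
Import Order.TTheory GRing.Theory Num.Theory.
Local Open Scope ring_scope.

Record effect_algebra := EffectAlgebra {
  ea_car :> Type;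
  ea_sum : ea_car -> ea_car -> option ea_car;
  ea_compl : ea_car -> ea_car;
  ea_zero : ea_car;
  ea_one : ea_car;
  ea_sumC : forall a b, ea_sum a b = ea_sum b a;
  (* Kleene associativity (the converse direction follows by commutativity) *)
  ea_sumA : forall a b c ab abc, ea_sum a b = Some ab -> ea_sum ab c = Some abc ->
      exists bc, ea_sum b c = Some bc /\ ea_sum a bc = Some abc;
  ea_complP : forall a b, ea_sum a b = Some ea_one <-> b = ea_compl a;
  ea_oneP : forall a, ea_sum a ea_one <> None <-> a = ea_zero
}.

Arguments ea_sum {e}. Arguments ea_compl {e}.
Arguments ea_zero {e}. Arguments ea_one {e}.

Definition ea_hom (E F : effect_algebra) (f : E -> F) : Prop :=
  (forall a b c : E, ea_sum a b = Some c -> ea_sum (f a) (f b) = Some (f c))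
  /\ f ea_one = ea_one.

Definition ea_bimor (E F G : effect_algebra) (b : E -> F -> G) : Prop :=
  (forall (x : E) (y1 y2 y : F), ea_sum y1 y2 = Some y ->
      ea_sum (b x y1) (b x y2) = Some (b x y))
  /\ (forall (y : F) (x1 x2 x : E), ea_sum x1 x2 = Some x ->
      ea_sum (b x1 y) (b x2 y) = Some (b x y))
  /\ b ea_one ea_one = ea_one.

Record ea_tensor (E F : effect_algebra) := EATensor {
  et_obj : effect_algebra;
  et_map : E -> F -> et_obj;
  et_bimor : ea_bimor et_map;
  et_univ : forall (G : effect_algebra) (b : E -> F -> G), ea_bimor b ->
     exists h : et_obj -> G, (ea_hom h /\ forall x y, h (et_map x y) = b x y) /\
       forall h' : et_obj -> G, ea_hom h' -> (forall x y, h' (et_map x y) = b x y) ->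
         forall t, h' t = h t
}.

Definition two_sum (a b : bool) : option bool :=
  match a, b with
  | true, true => None
  | true, false => Some true
  | false, x => Some x
  end.

Lemma two_sumC a b : two_sum a b = two_sum b a.
Proof. by case: a; case: b. Qed.

Lemma two_sumA a b c ab abc : two_sum a b = Some ab -> two_sum ab c = Some abc ->
  exists bc, two_sum b c = Some bc /\ two_sum a bc = Some abc.
Proof.
case: a; case: b; case: c => //= -[<-] //= -[<-];
  eexists; split; reflexivity.
Qed.

Lemma two_complP a b : two_sum a b = Some true <-> b = ~~ a.
Proof. by case: a; case: b. Qed.

Lemma two_oneP a : two_sum a true <> None <-> a = false.
Proof. by case: a. Qed.

Definition EA2 : effect_algebra :=
  @EffectAlgebra bool two_sum negb false true two_sumC two_sumA two_complP two_oneP.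

Record pog := POG {
  pog_car :> zmodType;
  pog_pos : pog_car -> Prop;
  pog_pos0 : pog_pos 0;
  pog_posD : forall x y, pog_pos x -> pog_pos y -> pog_pos (x + y);
  pog_posN : forall x, pog_pos x -> pog_pos (- x) -> x = 0
}.
Arguments pog_pos {p}.

Definition pog_le (A : pog) (x y : A) : Prop := pog_pos (y - x).

Definition order_unit (A : pog) (u : A) : Prop :=
  pog_pos u /\ forall x : A, exists n : nat, pog_le x (u *+ n).

Record pogu := POGu {
  pg :> pog;
  pg_unit : pg;
  pg_unitP : order_unit pg_unit
}.
Arguments pg_unit {p}.

Definition pog_hom (A B : pog) (f : A -> B) : Prop :=
  (forall x y, f (x + y) = f x + f y) /\ (forall x, pog_pos x -> pog_pos (f x)).

Definition pogu_hom (A B : pogu) (f : A -> B) : Prop :=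
  pog_hom f /\ f pg_unit = pg_unit.

Definition pogu_iso (A B : pogu) (f : A -> B) : Prop :=
  pogu_hom f /\ exists g : B -> A, pogu_hom g /\ cancel f g /\ cancel g f.

Lemma int_pos0 : (0 : int) <= 0. Proof. by []. Qed.
Lemma int_posD (x y : int) : 0 <= x -> 0 <= y -> 0 <= x + y.
Proof. exact: addr_ge0. Qed.
Lemma int_posN (x : int) : 0 <= x -> 0 <= - x -> x = 0.
Proof. by move=> h1; rewrite oppr_ge0 => h2; apply/eqP; rewrite eq_le h1 h2. Qed.

Definition Zpog : pog := @POG int (fun x => 0 <= x) int_pos0 int_posD int_posN.

Lemma Zunit : order_unit (A := Zpog) 1.
Proof.
split; first by rewrite /= ler01.
move=> x; exists `|x|%N; rewrite /pog_le /= subr_ge0.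
rewrite -[1 *+ _]/((`|x|%N)%:R) natr_absz intz; exact: ler_norm.
Qed.

Definition Zu : pogu := @POGu Zpog 1 Zunit.

(* Gamma(B,w)-valued effect algebra homomorphisms, written out *)
Definition gamma_hom (E : effect_algebra) (B : pog) (w : B) (phi : E -> B) : Prop :=
  (forall x, pog_le 0 (phi x) /\ pog_le (phi x) w) /\
  (forall a b c : E, ea_sum a b = Some c -> phi c = phi a + phi b) /\
  phi ea_one = w.

Record univ_group (E : effect_algebra) := UnivGroup {
  ug_obj : pogu;
  ug_eta : E -> ug_obj;
  ug_etaP : gamma_hom pg_unit ug_eta;
  ug_univ : forall (B : pog) (w : B), pog_pos w -> forall phi : E -> B, gamma_hom w phi ->
     exists g : ug_obj -> B, (pog_hom g /\ g pg_unit = w /\ forall x, g (ug_eta x) = phi x) /\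
       forall g' : ug_obj -> B, pog_hom g' -> g' pg_unit = w ->
         (forall x, g' (ug_eta x) = phi x) -> forall t, g' t = g t
}.

Definition biadditive (A B : zmodType) (C : zmodType) (f : A -> B -> C) : Prop :=
  (forall a b1 b2, f a (b1 + b2) = f a b1 + f a b2) /\
  (forall a1 a2 b, f (a1 + a2) b = f a1 b + f a2 b).

Record pogu_tensor (A B : pogu) := POGuTensor {
  pt_obj : pogu;
  pt_map : A -> B -> pt_obj;
  pt_biadd : biadditive pt_map;
  pt_univ : forall (C : zmodType) (f : A -> B -> C), biadditive f ->
     exists h : pt_obj -> C, ((forall s t, h (s + t) = h s + h t) /\
        forall a b, h (pt_map a b) = f a b) /\
       forall h' : pt_obj -> C, (forall s t, h' (s + t) = h' s + h' t) ->
         (forall a b, h' (pt_map a b) = f a b) -> forall t, h' t = h t;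
  pt_pos : forall t : pt_obj, pog_pos t <->
     exists (n : nat) (a : 'I_n -> A) (b : 'I_n -> B),
        (forall i, pog_pos (a i) /\ pog_pos (b i)) /\
        t = \sum_(i < n) pt_map (a i) (b i);
  pt_unit : pg_unit = pt_map pg_unit pg_unit
}.

Definition is_Gr_map (E E' : effect_algebra) (f : E -> E')
    (G : univ_group E) (G' : univ_group E') (g : ug_obj G -> ug_obj G') : Prop :=
  pogu_hom g /\ forall x, g (ug_eta G x) = ug_eta G' (f x).

Arguments is_Gr_map {E E'} f G G' g.

Definition is_ea_tensor_map (E F E' F' : effect_algebra) (T : ea_tensor E F)
    (T' : ea_tensor E' F') (f : E -> E') (g : F -> F') (h : et_obj T -> et_obj T') :=
  ea_hom h /\ forall x y, h (et_map T x y) = et_map T' (f x) (g y).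

Arguments is_ea_tensor_map {E F E' F'} T T' f g h.

Definition is_pog_tensor_map (A B A' B' : pogu) (P : pogu_tensor A B)
    (P' : pogu_tensor A' B') (f : A -> A') (g : B -> B') (k : pt_obj P -> pt_obj P') :=
  pogu_hom k /\ forall a b, k (pt_map P a b) = pt_map P' (f a) (g b).

Arguments is_pog_tensor_map {A B A' B'} P P' f g k.

Definition is_mu (E F : effect_algebra) (T : ea_tensor E F) (GE : univ_group E)
    (GF : univ_group F) (GT : univ_group (et_obj T))
    (P : pogu_tensor (ug_obj GE) (ug_obj GF)) (m : pt_obj P -> ug_obj GT) : Prop :=
  pogu_hom m /\
  forall x y, m (pt_map P (ug_eta GE x) (ug_eta GF y)) = ug_eta GT (et_map T x y).

Definition eps (G2 : univ_group EA2) (z : int) : ug_obj G2 := pg_unit *~ z.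

Definition epsilon_ok : Prop :=
  forall G2 : univ_group EA2,
    pogu_iso (A := Zu) (eps G2) /\
    forall f : Zu -> ug_obj G2, pogu_hom f -> forall z, f z = eps G2 z.

Definition mu_iso_ok : Prop :=
  forall (E F : effect_algebra) (T : ea_tensor E F) (GE : univ_group E)
    (GF : univ_group F) (GT : univ_group (et_obj T))
    (P : pogu_tensor (ug_obj GE) (ug_obj GF)),
  exists m : pt_obj P -> ug_obj GT,
    is_mu m /\ pogu_iso m /\
    forall m' : pt_obj P -> ug_obj GT, is_mu m' -> forall t, m' t = m t.

Definition mu_natural : Prop :=
  forall (E E' F F' : effect_algebra) (f : E -> E') (g : F -> F'),
  ea_hom f -> ea_hom g ->
  forall (T : ea_tensor E F) (T' : ea_tensor E' F')
    (GE : univ_group E) (GE' : univ_group E') (GF : univ_group F) (GF' : univ_group F')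
    (GT : univ_group (et_obj T)) (GT' : univ_group (et_obj T'))
    (P : pogu_tensor (ug_obj GE) (ug_obj GF)) (P' : pogu_tensor (ug_obj GE') (ug_obj GF'))
    (fg : et_obj T -> et_obj T') (Gf : ug_obj GE -> ug_obj GE')
    (Gg : ug_obj GF -> ug_obj GF') (Gfg : ug_obj GT -> ug_obj GT')
    (k : pt_obj P -> pt_obj P') (m : pt_obj P -> ug_obj GT) (m' : pt_obj P' -> ug_obj GT'),
  is_ea_tensor_map T T' f g fg -> is_Gr_map f GE GE' Gf -> is_Gr_map g GF GF' Gg ->
  is_Gr_map fg GT GT' Gfg -> is_pog_tensor_map P P' Gf Gg k ->
  is_mu m -> is_mu m' ->
  forall t, Gfg (m t) = m' (k t).

(* associativity coherence:
   Gr(alpha) o mu_{E(x)F,H} o (mu_{E,F} (x) id) = mu_{E,F(x)H} o (id (x) mu_{F,H}) o alpha *)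
Definition mu_assoc : Prop :=
  forall (E F H : effect_algebra) (TEF : ea_tensor E F) (TFH : ea_tensor F H)
    (TL : ea_tensor (et_obj TEF) H) (TR : ea_tensor E (et_obj TFH))
    (GE : univ_group E) (GF : univ_group F) (GH : univ_group H)
    (GEF : univ_group (et_obj TEF)) (GFH : univ_group (et_obj TFH))
    (GL : univ_group (et_obj TL)) (GR : univ_group (et_obj TR))
    (PEF : pogu_tensor (ug_obj GE) (ug_obj GF)) (PFH : pogu_tensor (ug_obj GF) (ug_obj GH))
    (PL : pogu_tensor (ug_obj GEF) (ug_obj GH)) (PR : pogu_tensor (ug_obj GE) (ug_obj GFH))
    (QL : pogu_tensor (pt_obj PEF) (ug_obj GH)) (QR : pogu_tensor (ug_obj GE) (pt_obj PFH))
    (alpha : et_obj TL -> et_obj TR) (Galpha : ug_obj GL -> ug_obj GR)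
    (alphaP : pt_obj QL -> pt_obj QR)
    (mEF : pt_obj PEF -> ug_obj GEF) (mFH : pt_obj PFH -> ug_obj GFH)
    (mL : pt_obj PL -> ug_obj GL) (mR : pt_obj PR -> ug_obj GR)
    (k1 : pt_obj QL -> pt_obj PL) (k2 : pt_obj QR -> pt_obj PR),
  ea_hom alpha ->
  (forall x y z, alpha (et_map TL (et_map TEF x y) z) = et_map TR x (et_map TFH y z)) ->
  is_Gr_map alpha GL GR Galpha ->
  pogu_hom alphaP ->
  (forall a b c, alphaP (pt_map QL (pt_map PEF a b) c) = pt_map QR a (pt_map PFH b c)) ->
  is_mu mEF -> is_mu mFH -> is_mu mL -> is_mu mR ->
  is_pog_tensor_map QL PL mEF id k1 -> is_pog_tensor_map QR PR id mFH k2 ->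
  forall t, Galpha (mL (k1 t)) = mR (k2 (alphaP t)).

(* left unit coherence: Gr(lambda) o mu_{2,E} o (eps (x) id) = lambda *)
Definition mu_left_unit : Prop :=
  forall (E : effect_algebra) (T : ea_tensor EA2 E) (G2 : univ_group EA2)
    (GE : univ_group E) (GT : univ_group (et_obj T))
    (P : pogu_tensor (ug_obj G2) (ug_obj GE)) (Q : pogu_tensor Zu (ug_obj GE))
    (lam : et_obj T -> E) (Glam : ug_obj GT -> ug_obj GE) (lamP : pt_obj Q -> ug_obj GE)
    (m : pt_obj P -> ug_obj GT) (k : pt_obj Q -> pt_obj P),
  ea_hom lam -> (forall (b : bool) (x : E), lam (et_map T b x) = if b then x else ea_zero) ->
  is_Gr_map lam GT GE Glam ->
  pogu_hom lamP -> (forall (n : int) a, lamP (pt_map Q n a) = a *~ n) ->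
  is_mu m -> is_pog_tensor_map Q P (eps G2) id k ->
  forall t, Glam (m (k t)) = lamP t.

(* right unit coherence: Gr(rho) o mu_{E,2} o (id (x) eps) = rho *)
Definition mu_right_unit : Prop :=
  forall (E : effect_algebra) (T : ea_tensor E EA2) (G2 : univ_group EA2)
    (GE : univ_group E) (GT : univ_group (et_obj T))
    (P : pogu_tensor (ug_obj GE) (ug_obj G2)) (Q : pogu_tensor (ug_obj GE) Zu)
    (rho : et_obj T -> E) (Grho : ug_obj GT -> ug_obj GE) (rhoP : pt_obj Q -> ug_obj GE)
    (m : pt_obj P -> ug_obj GT) (k : pt_obj Q -> pt_obj P),
  ea_hom rho -> (forall (x : E) (b : bool), rho (et_map T x b) = if b then x else ea_zero) ->
  is_Gr_map rho GT GE Grho ->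
  pogu_hom rhoP -> (forall a (n : int), rhoP (pt_map Q a n) = a *~ n) ->
  is_mu m -> is_pog_tensor_map Q P id (eps G2) k ->
  forall t, Grho (m (k t)) = rhoP t.

(* Both Gr(E) ⊗ Gr(F) and Gr(E ⊗ F) are universal for bimorphisms from E × F
   into intervals Γ(B, w) of po-groups, so μ and its inverse both come from
   universal properties; the universal property of E ⊗ F only speaks about
   effect-algebra targets, so it is used with the interval effect algebra
   Γ(B, w) as target.  The one genuine construction is the extension of a
   bimorphism b : E × F → Γ(C, w) to a positive biadditive map
   Gr(E) × Gr(F) → C: extend b(x, -) to Gr(F) for every x, then, for every
   q ≥ 0, extend x ↦ b(x, q) to Gr(E), and finally leave the positive cone of
   Gr(F) by writing each element as a difference of positive ones, which the
   order unit makes possible.  Naturality, the coherence conditions and the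
   properties of ε then follow from the uniqueness clauses, since every map
   involved is determined by its values on the generators [x] ⊗ [y]. *)
From mathcomp Require Import all_boot all_order all_algebra.
From Stdlib Require Import ClassicalEpsilon ProofIrrelevance.
Set Implicit Arguments. Unset Strict Implicit. Unset Printing Implicit Defensive.
Import GRing.Theory.
Local Open Scope ring_scope.

Section AdditiveFunctions.
Variables (A B : zmodType) (g : A -> B).
Hypothesis gD : {morph g : x y / x + y}.

Lemma addf0 : g 0 = 0.
Proof. by apply: (@addrI _ (g 0)); rewrite -gD !addr0. Qed.

Lemma addfN : {morph g : x / - x}.
Proof. by move=> x; apply: (@addrI _ (g x)); rewrite -gD !subrr addf0. Qed.

Lemma addfB : {morph g : x y / x - y}.
Proof. by move=> x y; rewrite gD addfN. Qed.

Lemma addfMn x n : g (x *+ n) = g x *+ n.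
Proof. by elim: n => [|n IH]; rewrite ?mulr0n ?addf0 // !mulrS gD IH. Qed.

Lemma addfMz x z : g (x *~ z) = g x *~ z.
Proof. by case: z => n; rewrite /= ?addfN addfMn. Qed.

Lemma addf_sum n (F : 'I_n -> A) : g (\sum_(i < n) F i) = \sum_(i < n) g (F i).
Proof. by elim: n F => [|n IH] F; rewrite ?big_ord0 ?addf0 // !big_ord_recr /= gD IH. Qed.

End AdditiveFunctions.

Lemma addf_int (B : zmodType) (g : int -> B) :
  {morph g : x y / x + y} -> forall z, g z = g 1 *~ z.
Proof. by move=> gD z; rewrite -addfMz // -[1 *~ z]/(z%:~R) intz. Qed.

Section POGroups.
Variable A : pog.
Implicit Types x y z : A.

Lemma pog_ge0 x : pog_le 0 x <-> pog_pos x.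
Proof. by rewrite /pog_le subr0. Qed.

Lemma pog_le_refl x : pog_le x x.
Proof. by rewrite /pog_le subrr; exact: pog_pos0. Qed.

Lemma pog_le_trans x y z : pog_le x y -> pog_le y z -> pog_le x z.
Proof. by rewrite /pog_le => hxy hyz; rewrite -(subrK y z) -addrA; apply: pog_posD. Qed.

Lemma pog_le_addr x y : pog_pos y -> pog_le x (x + y).
Proof. by rewrite /pog_le addrC addKr. Qed.

Lemma pog_posMn x n : pog_pos x -> pog_pos (x *+ n).
Proof.
move=> hx; elim: n => [|n IH]; first by rewrite mulr0n; exact: pog_pos0.
by rewrite mulrS; apply: pog_posD.
Qed.

Lemma pog_pos_sum n (F : 'I_n -> A) :
  (forall i, pog_pos (F i)) -> pog_pos (\sum_(i < n) F i).
Proof.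
elim: n F => [|n IH] F hF; first by rewrite big_ord0; exact: pog_pos0.
by rewrite big_ord_recr /=; apply: pog_posD => //; apply: IH.
Qed.

End POGroups.

Lemma pog_hom_comp (A B C : pog) (f : A -> B) (g : B -> C) :
  pog_hom f -> pog_hom g -> pog_hom (g \o f).
Proof. by move=> [fD fP] [gD gP]; split=> [x y|x /fP /gP] //=; rewrite fD gD. Qed.

Lemma pog_homD (A B : pog) (f g : A -> B) :
  pog_hom f -> pog_hom g -> pog_hom (fun x => f x + g x).
Proof.
move=> [fD fP] [gD gP]; split=> [x y|x hx]; first by rewrite fD gD addrACA.
by apply: pog_posD; [apply: fP|apply: gP].
Qed.

Lemma pogu_unit_pos (A : pogu) : pog_pos (pg_unit : A).
Proof. by case: (pg_unitP A). Qed.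

Lemma pogu_split (A : pogu) (a : A) :
  {pq : A * A | [/\ pog_pos pq.1, pog_pos pq.2 & a = pq.1 - pq.2]}.
Proof.
apply: constructive_indefinite_description.
have [n han] := (pg_unitP A).2 a.
exists (pg_unit *+ n, pg_unit *+ n - a); split => //=.
  exact/pog_posMn/pogu_unit_pos.
by rewrite opprB addrC subrK.
Qed.

Lemma pogu_ext (A : pogu) (Z : zmodType) (g1 g2 : A -> Z) :
  {morph g1 : x y / x + y} -> {morph g2 : x y / x + y} ->
  (forall p, pog_pos p -> g1 p = g2 p) -> g1 =1 g2.
Proof.
move=> g1D g2D e a; have [[p q] /= [p0 q0 ->]] := pogu_split a.
by rewrite (addfB g1D) (addfB g2D) !e.
Qed.

Lemma ea_sum_compl (E : effect_algebra) (x : E) : ea_sum x (ea_compl x) = Some ea_one.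
Proof. exact/ea_complP. Qed.

Section GammaHoms.
Variables (E : effect_algebra) (B : pog) (w : B) (phi : E -> B).
Hypothesis hphi : gamma_hom w phi.

Lemma gamma_hom_ge0 x : pog_pos (phi x).
Proof. by apply/pog_ge0; case: (hphi.1 x). Qed.

Lemma gamma_hom_le x : pog_le (phi x) w.
Proof. by case: (hphi.1 x). Qed.

Lemma gamma_homD a b c : ea_sum a b = Some c -> phi c = phi a + phi b.
Proof. exact: hphi.2.1. Qed.

Lemma gamma_hom1 : phi ea_one = w.
Proof. exact: hphi.2.2. Qed.

Lemma gamma_hom_unit_ge0 : pog_pos w.
Proof. by rewrite -gamma_hom1; apply: gamma_hom_ge0. Qed.

End GammaHoms.

Lemma gamma_hom_of_additive (E : effect_algebra) (B : pog) (phi : E -> B) :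
  (forall x, pog_pos (phi x)) ->
  (forall a b c, ea_sum a b = Some c -> phi c = phi a + phi b) ->
  gamma_hom (phi ea_one) phi.
Proof.
move=> phiP phiD; split=> // x; split; first exact/pog_ge0.
by rewrite (phiD _ _ _ (ea_sum_compl x)); apply: pog_le_addr.
Qed.

Lemma gamma_hom_comp (E : effect_algebra) (B C : pog) (w : B) (phi : E -> B) (g : B -> C) :
  gamma_hom w phi -> pog_hom g -> gamma_hom (g w) (g \o phi).
Proof.
move=> hphi [gD gP]; rewrite -(gamma_hom1 hphi).
apply: gamma_hom_of_additive => [x|a b c /(gamma_homD hphi) /= ->] //=.
exact/gP/(gamma_hom_ge0 hphi).
Qed.

Section UniversalGroup.
Variables (E : effect_algebra) (G : univ_group E).
Local Notation eta := (ug_eta G).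

Lemma ug_lift (B : pog) (w : B) (phi : E -> B) : gamma_hom w phi ->
  {g : ug_obj G -> B | [/\ pog_hom g, g pg_unit = w & forall x, g (eta x) = phi x]}.
Proof.
move=> hphi; apply: constructive_indefinite_description.
have [g [[? [? ?]] _]] := ug_univ G (gamma_hom_unit_ge0 hphi) hphi.
by exists g.
Qed.

Lemma ug_ext (B : pog) (g g' : ug_obj G -> B) : pog_hom g -> pog_hom g' ->
  (forall x, g (eta x) = g' (eta x)) -> g =1 g'.
Proof.
move=> hg hg' e.
have hgeta := gamma_hom_comp (ug_etaP G) hg.
have [? [_ uniq]] := ug_univ G (gamma_hom_unit_ge0 hgeta) hgeta.
have g'1 : g' pg_unit = g pg_unit by rewrite -(gamma_hom1 (ug_etaP G)) e.
by move=> t; rewrite (uniq g) // (uniq g') // => x; rewrite -e.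
Qed.

End UniversalGroup.

Section GammaEffectAlgebra.
Variables (B : pog) (w : B).
Hypothesis w_ge0 : pog_pos w.

Definition gamma_car := {x : B | pog_le 0 x /\ pog_le x w}.

Lemma gamma_val_inj (a b : gamma_car) : sval a = sval b -> a = b.
Proof. by apply: eq_sig_hprop => x; apply: proof_irrelevance. Qed.

Lemma gamma_sum_in (a b : gamma_car) : pog_le (sval a + sval b) w ->
  pog_le 0 (sval a + sval b) /\ pog_le (sval a + sval b) w.
Proof.
case: a b => [a [a0 _]] [b [b0 _]] /= abw; split => //.
by apply/pog_ge0/pog_posD; apply/pog_ge0.
Qed.

Definition gamma_sum (a b : gamma_car) : option gamma_car :=
  if excluded_middle_informative (pog_le (sval a + sval b) w) is left abw
  then Some (exist _ _ (gamma_sum_in abw)) else None.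

Lemma gamma_sumP a b c :
  gamma_sum a b = Some c <-> pog_le (sval a + sval b) w /\ sval c = sval a + sval b.
Proof.
rewrite /gamma_sum; case: excluded_middle_informative => abw; split => //.
- by case=> <-.
- by case=> _ e; congr Some; apply: gamma_val_inj.
- by case.
Qed.

Lemma gamma_sumN a b : gamma_sum a b = None <-> ~ pog_le (sval a + sval b) w.
Proof. by rewrite /gamma_sum; case: excluded_middle_informative. Qed.

Lemma gamma_compl_in (a : gamma_car) : pog_le 0 (w - sval a) /\ pog_le (w - sval a) w.
Proof.
case: a => [a [a0 aw]] /=; split; first exact/pog_ge0.
by rewrite /pog_le opprB addrC subrK; apply/pog_ge0.
Qed.

Definition gamma_compl (a : gamma_car) : gamma_car := exist _ _ (gamma_compl_in a).

Definition gamma_zero : gamma_car :=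
  exist _ 0 (conj (pog_le_refl 0) (proj2 (pog_ge0 w) w_ge0)).

Definition gamma_one : gamma_car :=
  exist _ w (conj (proj2 (pog_ge0 w) w_ge0) (pog_le_refl w)).

Lemma gamma_sumC a b : gamma_sum a b = gamma_sum b a.
Proof.
case ab: (gamma_sum a b) => [c|]; case ba: (gamma_sum b a) => [d|] //.
- move/gamma_sumP: ab => [_ ec]; move/gamma_sumP: ba => [_ ed].
  by congr Some; apply: gamma_val_inj; rewrite ec ed addrC.
- by move/gamma_sumP: ab => [abw _]; move/gamma_sumN: ba; rewrite addrC.
- by move/gamma_sumP: ba => [baw _]; move/gamma_sumN: ab; rewrite addrC.
Qed.

Lemma gamma_sumA a b c ab abc : gamma_sum a b = Some ab -> gamma_sum ab c = Some abc ->
  exists bc, gamma_sum b c = Some bc /\ gamma_sum a bc = Some abc.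
Proof.
move=> /gamma_sumP [_ eab] /gamma_sumP [abcw eabc]; rewrite eab in abcw eabc.
have bcw : pog_le (sval b + sval c) w.
  apply: pog_le_trans abcw; rewrite -addrA addrC; apply: pog_le_addr.
  by apply/pog_ge0; case: (svalP a).
case bc: (gamma_sum b c) => [d|]; last by move/gamma_sumN: bc.
move/gamma_sumP: (bc) => [_ ed]; exists d; split => //.
by apply/gamma_sumP; rewrite ed addrA -eabc; split => //; case: (svalP abc).
Qed.

Lemma gamma_complP a b : gamma_sum a b = Some gamma_one <-> b = gamma_compl a.
Proof.
split=> [/gamma_sumP [_ /= e]|->].
  by apply: gamma_val_inj; apply: (@addrI _ (sval a)); rewrite /= -e addrC subrK.
by apply/gamma_sumP; rewrite /= addrC subrK; split => //; apply: pog_le_refl.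
Qed.

Lemma gamma_oneP a : gamma_sum a gamma_one <> None <-> a = gamma_zero.
Proof.
split=> [|-> /gamma_sumN []]; last by rewrite /= add0r; apply: pog_le_refl.
case aw: (gamma_sum a gamma_one) => [c|] // _; move/gamma_sumP: aw => [/= aww _].
apply: gamma_val_inj; case: a aww => a [/pog_ge0 a0 _] /=.
by rewrite /pog_le opprD addrA addrAC subrr add0r; apply: pog_posN.
Qed.

Definition GammaEA : effect_algebra :=
  EffectAlgebra gamma_sumC gamma_sumA gamma_complP gamma_oneP.

Lemma gamma_hom_val (E : effect_algebra) (h : E -> GammaEA) :
  ea_hom h -> gamma_hom w (fun x => sval (h x)).
Proof.
move=> [hD h1]; split; [by move=> x; case: (h x)|split; last by rewrite h1].
by move=> a b c /hD /gamma_sumP [].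
Qed.

Definition gamma_lift (E : effect_algebra) (phi : E -> B) (hphi : gamma_hom w phi)
  (x : E) : GammaEA := exist _ (phi x) (hphi.1 x).

Lemma gamma_lift_hom (E : effect_algebra) (phi : E -> B) (hphi : gamma_hom w phi) :
  ea_hom (gamma_lift hphi).
Proof.
split=> [a b c abc|]; last by apply: gamma_val_inj; rewrite /= (gamma_hom1 hphi).
apply/gamma_sumP; rewrite /= -(gamma_homD hphi abc); split => //.
exact: gamma_hom_le hphi c.
Qed.

End GammaEffectAlgebra.

(* Bimorphisms E × F -> Γ(B, w); the bound [b x y <= w] is derivable, see
   [gamma_bimor_le]. *)
Definition gamma_bimor (E F : effect_algebra) (B : pog) (w : B) (b : E -> F -> B) :=
  [/\ forall x y, pog_pos (b x y),
      forall x y1 y2 y, ea_sum y1 y2 = Some y -> b x y = b x y1 + b x y2,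
      forall y x1 x2 x, ea_sum x1 x2 = Some x -> b x y = b x1 y + b x2 y &
      b ea_one ea_one = w].

Section GammaBimorphisms.
Variables (E F : effect_algebra) (B : pog) (w : B) (b : E -> F -> B).
Hypothesis hb : gamma_bimor w b.

Lemma gamma_bimor_r x : gamma_hom (b x ea_one) (b x).
Proof. by case: hb => b0 bD _ _; apply: gamma_hom_of_additive => //; apply: bD. Qed.

Lemma gamma_bimor_l y : gamma_hom (b ea_one y) (b^~ y).
Proof. by case: hb => b0 _ bD _; apply: gamma_hom_of_additive => //; apply: bD. Qed.

Lemma gamma_bimor_unit_ge0 : pog_pos w.
Proof. by case: hb => b0 _ _ <-. Qed.

Lemma gamma_bimor_le x y : pog_le (b x y) w.
Proof.
case: hb => _ _ _ <-; apply: pog_le_trans (gamma_hom_le (gamma_bimor_r x) y) _.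
exact: gamma_hom_le (gamma_bimor_l ea_one) x.
Qed.

End GammaBimorphisms.

Section EATensorGamma.
Variables (E F : effect_algebra) (T : ea_tensor E F).
Local Notation tm := (et_map T).

Lemma ea_hom_tensor_bimor (G : effect_algebra) (h : et_obj T -> G) :
  ea_hom h -> ea_bimor (fun x y => h (tm x y)).
Proof.
case: (et_bimor T) => tr [tl t1] [hD h1]; split; [|split].
- by move=> x y1 y2 y /(tr x) /hD.
- by move=> y x1 x2 x /(tl y) /hD.
- by rewrite t1 h1.
Qed.

Lemma gamma_hom_tensor (B : pog) (w : B) (phi : et_obj T -> B) :
  gamma_hom w phi -> gamma_bimor w (fun x y => phi (tm x y)).
Proof.
move=> hphi; case: (et_bimor T) => tr [tl t1]; split.
- by move=> x y; apply: gamma_hom_ge0 hphi _.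
- by move=> x y1 y2 y /(tr x) /(gamma_homD hphi).
- by move=> y x1 x2 x /(tl y) /(gamma_homD hphi).
- by rewrite t1 (gamma_hom1 hphi).
Qed.

Lemma ea_tensor_gamma_lift (B : pog) (w : B) (b : E -> F -> B) : gamma_bimor w b ->
  exists phi : et_obj T -> B, gamma_hom w phi /\ forall x y, phi (tm x y) = b x y.
Proof.
move=> hb; have w0 := gamma_bimor_unit_ge0 hb.
have bw x y : pog_le 0 (b x y) /\ pog_le (b x y) w.
  by split; [apply/pog_ge0; case: hb|exact: (gamma_bimor_le hb x y)].
pose bG x y : GammaEA w0 := exist _ (b x y) (bw x y).
have bGbi : ea_bimor bG.
  case: hb => _ bDr bDl b1; split; [|split].
  - move=> x y1 y2 y /(bDr x) e; apply/gamma_sumP; rewrite /= -e.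
    by split=> //; exact: (bw x y).2.
  - move=> y x1 x2 x /(bDl y) e; apply/gamma_sumP; rewrite /= -e.
    by split=> //; exact: (bw x y).2.
  - by apply: gamma_val_inj; rewrite /= b1.
have [h [[hh he] _]] := et_univ T bGbi.
exists (fun t => sval (h t)); split; first exact: gamma_hom_val.
by move=> x y; rewrite he.
Qed.

Lemma ea_tensor_gamma_ext (B : pog) (w : B) (phi1 phi2 : et_obj T -> B) :
  gamma_hom w phi1 -> gamma_hom w phi2 ->
  (forall x y, phi1 (tm x y) = phi2 (tm x y)) -> phi1 =1 phi2.
Proof.
move=> h1 h2 e t; have w0 := gamma_hom_unit_ge0 h1.
have [h [_ uniq]] := et_univ T (ea_hom_tensor_bimor (gamma_lift_hom w0 h1)).
have /(congr1 sval) // : gamma_lift w0 h1 t = gamma_lift w0 h2 t.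
rewrite (uniq _ (gamma_lift_hom w0 h1)) // (uniq _ (gamma_lift_hom w0 h2)) // => x y.
by apply: gamma_val_inj; rewrite /= e.
Qed.

End EATensorGamma.

Section ConeExtension.
Variables (A : pogu) (Z : zmodType) (k : A -> Z).
Hypothesis kD : forall p q, pog_pos p -> pog_pos q -> k (p + q) = k p + k q.

Definition cone_ext (a : A) : Z :=
  k (sval (pogu_split a)).1 - k (sval (pogu_split a)).2.

Lemma cone_extE p q : pog_pos p -> pog_pos q -> cone_ext (p - q) = k p - k q.
Proof.
move=> p0 q0; rewrite /cone_ext; case: pogu_split => -[p' q'] /= [p'0 q'0 e].
have e' : p' + q = p + q' by rewrite -[p'](subrK q') -e addrAC subrK.
by apply/eqP; rewrite subr_eq addrAC eq_sym subr_eq -!kD // e'.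
Qed.

Lemma cone_ext_pos p : pog_pos p -> cone_ext p = k p.
Proof.
move=> p0; have k0 : k 0 = 0.
  by apply: (@addrI _ (k 0)); rewrite -kD ?addr0 //; exact: pog_pos0.
by have := cone_extE p0 (pog_pos0 A); rewrite subr0 k0 subr0.
Qed.

Lemma cone_extD : {morph cone_ext : a b / a + b}.
Proof.
move=> a b; have [[p q] /= [p0 q0 ->]] := pogu_split a.
have [[p' q'] /= [p'0 q'0 ->]] := pogu_split b.
have pp0 := pog_posD p0 p'0; have qq0 := pog_posD q0 q'0.
by rewrite addrACA -opprD !cone_extE // !kD // opprD addrACA.
Qed.

End ConeExtension.

Definition bipositive (A B C : pog) (f : A -> B -> C) :=
  forall a b, pog_pos a -> pog_pos b -> pog_pos (f a b).

Section POGroupTensor.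
Variables (A B : pogu) (P : pogu_tensor A B).
Local Notation pt := (pt_map P).

Lemma pt_mapDl b : {morph pt^~ b : a1 a2 / a1 + a2}.
Proof. by move=> a1 a2; apply: (pt_biadd P).2. Qed.

Lemma pt_mapDr a : {morph pt a : b1 b2 / b1 + b2}.
Proof. by move=> b1 b2; apply: (pt_biadd P).1. Qed.

Lemma pt_map_pos : bipositive pt.
Proof.
move=> a b a0 b0; apply/pt_pos; exists 1%N, (fun=> a), (fun=> b).
by split=> //; rewrite big_ord1.
Qed.

Lemma pt_ext (Z : zmodType) (h1 h2 : pt_obj P -> Z) :
  {morph h1 : s t / s + t} -> {morph h2 : s t / s + t} ->
  (forall a b, h1 (pt a b) = h2 (pt a b)) -> h1 =1 h2.
Proof.
move=> h1D h2D e.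
have f_biadd : biadditive (fun a b => h1 (pt a b)).
  by split=> [a b1 b2|a1 a2 b]; rewrite ?pt_mapDl ?pt_mapDr h1D.
have [h [_ uniq]] := pt_univ P f_biadd.
by move=> t; rewrite (uniq h1) // (uniq h2).
Qed.

Lemma pt_lift (C : pog) (f : A -> B -> C) : biadditive f -> bipositive f ->
  exists h : pt_obj P -> C, pog_hom h /\ forall a b, h (pt a b) = f a b.
Proof.
move=> fD fP; have [h [[hD he] _]] := pt_univ P fD.
exists h; split=> //; split=> // t /pt_pos [n [a [b [ab0 ->]]]].
rewrite (addf_sum hD); apply: pog_pos_sum => i; rewrite he.
by case: (ab0 i); apply: fP.
Qed.

Lemma pt_hom_l (C : pog) (h : pt_obj P -> C) b :
  pog_hom h -> pog_pos b -> pog_hom (fun a => h (pt a b)).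
Proof.
move=> [hD hP] b0; split=> [a1 a2|a a0]; first by rewrite pt_mapDl hD.
exact/hP/pt_map_pos.
Qed.

Lemma pt_hom_r (C : pog) (h : pt_obj P -> C) a :
  pog_hom h -> pog_pos a -> pog_hom (fun b => h (pt a b)).
Proof.
move=> [hD hP] a0; split=> [b1 b2|b b0]; first by rewrite pt_mapDr hD.
exact/hP/pt_map_pos.
Qed.

End POGroupTensor.

Lemma pt_ext_r (A : pogu) (F : effect_algebra) (G : univ_group F)
    (P : pogu_tensor A (ug_obj G)) (C : pog) (h1 h2 : pt_obj P -> C) :
  pog_hom h1 -> pog_hom h2 ->
  (forall a y, h1 (pt_map P a (ug_eta G y)) = h2 (pt_map P a (ug_eta G y))) ->
  h1 =1 h2.
Proof.
move=> hh1 hh2 e; apply: pt_ext => [||a b]; [exact: hh1.1|exact: hh2.1|].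
apply: (@pogu_ext _ _ (fun a => h1 (pt_map P a b)) (fun a => h2 (pt_map P a b))).
- by move=> a1 a2; rewrite pt_mapDl hh1.1.
- by move=> a1 a2; rewrite pt_mapDl hh2.1.
move=> p p0.
apply: (@ug_ext _ _ _ (fun b => h1 (pt_map P p b)) (fun b => h2 (pt_map P p b))).
- exact: pt_hom_r.
- exact: pt_hom_r.
exact: e.
Qed.

Lemma pt_ext_l (E : effect_algebra) (G : univ_group E) (B : pogu)
    (P : pogu_tensor (ug_obj G) B) (C : pog) (h1 h2 : pt_obj P -> C) :
  pog_hom h1 -> pog_hom h2 ->
  (forall x b, h1 (pt_map P (ug_eta G x) b) = h2 (pt_map P (ug_eta G x) b)) ->
  h1 =1 h2.
Proof.
move=> hh1 hh2 e; apply: pt_ext => [||a b]; [exact: hh1.1|exact: hh2.1|].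
apply: (@pogu_ext _ _ (fun b => h1 (pt_map P a b)) (fun b => h2 (pt_map P a b))) b.
- by move=> b1 b2; rewrite pt_mapDr hh1.1.
- by move=> b1 b2; rewrite pt_mapDr hh2.1.
move=> q q0.
apply: (@ug_ext _ _ _ (fun a => h1 (pt_map P a q)) (fun a => h2 (pt_map P a q))).
- exact: pt_hom_l.
- exact: pt_hom_l.
by move=> x; apply: e.
Qed.

Lemma ug_tensor_ext (E F : effect_algebra) (GE : univ_group E) (GF : univ_group F)
    (P : pogu_tensor (ug_obj GE) (ug_obj GF)) (C : pog) (h1 h2 : pt_obj P -> C) :
  pog_hom h1 -> pog_hom h2 ->
  (forall x y, h1 (pt_map P (ug_eta GE x) (ug_eta GF y)) =
               h2 (pt_map P (ug_eta GE x) (ug_eta GF y))) ->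
  h1 =1 h2.
Proof.
move=> hh1 hh2 e; apply: pt_ext_r => // a y.
have y0 := gamma_hom_ge0 (ug_etaP GF) y.
apply: (@ug_ext _ _ _ (fun a => h1 (pt_map P a _)) (fun a => h2 (pt_map P a _))).
- exact: pt_hom_l.
- exact: pt_hom_l.
by move=> x; apply: e.
Qed.

Section BimorphismExtension.
Variables (E F : effect_algebra) (GE : univ_group E) (GF : univ_group F).
Variables (C : pog) (w : C) (b : E -> F -> C).
Hypothesis hb : gamma_bimor w b.
Local Notation eE := (ug_eta GE).
Local Notation eF := (ug_eta GF).

Definition bimor_ext_r (x : E) : ug_obj GF -> C :=
  sval (ug_lift GF (gamma_bimor_r hb x)).

Lemma bimor_ext_rP x :
  [/\ pog_hom (bimor_ext_r x), bimor_ext_r x pg_unit = b x ea_one &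
      forall y, bimor_ext_r x (eF y) = b x y].
Proof. by rewrite /bimor_ext_r; case: ug_lift. Qed.

Lemma bimor_ext_r_pos x t : pog_pos t -> pog_pos (bimor_ext_r x t).
Proof. by case: (bimor_ext_rP x) => -[_ hP] _ _; apply: hP. Qed.

Lemma bimor_ext_rD x1 x2 x t : ea_sum x1 x2 = Some x ->
  bimor_ext_r x t = bimor_ext_r x1 t + bimor_ext_r x2 t.
Proof.
move=> x12; have [h _ hy] := bimor_ext_rP x.
have [h1 _ hy1] := bimor_ext_rP x1; have [h2 _ hy2] := bimor_ext_rP x2.
move: t; apply: ug_ext => [||y] //; first exact: pog_homD.
by rewrite hy hy1 hy2; case: hb => _ _ bD _; apply: bD.
Qed.

Lemma bimor_ext_r_gamma q :
  pog_pos q -> gamma_hom (bimor_ext_r ea_one q) (bimor_ext_r^~ q).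
Proof.
move=> q0; apply: gamma_hom_of_additive => [x|x1 x2 x /bimor_ext_rD //].
exact: bimor_ext_r_pos.
Qed.

(* Outside the positive cone the value [0] is junk; [bimor_ext] only uses the cone. *)
Definition bimor_ext_cone (q : ug_obj GF) : ug_obj GE -> C :=
  if excluded_middle_informative (pog_pos q) is left q0
  then sval (ug_lift GE (bimor_ext_r_gamma q0)) else fun=> 0.

Lemma bimor_ext_coneP q : pog_pos q ->
  pog_hom (bimor_ext_cone q) /\ forall x, bimor_ext_cone q (eE x) = bimor_ext_r x q.
Proof.
rewrite /bimor_ext_cone; case: excluded_middle_informative => // q0 _.
by case: ug_lift => g [].
Qed.

Lemma bimor_ext_coneD a p q : pog_pos p -> pog_pos q ->
  bimor_ext_cone (p + q) a = bimor_ext_cone p a + bimor_ext_cone q a.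
Proof.
move=> p0 q0; have [hpq epq] := bimor_ext_coneP (pog_posD p0 q0).
have [hp ep] := bimor_ext_coneP p0; have [hq eq] := bimor_ext_coneP q0.
move: a; apply: ug_ext => [||x] //; first exact: pog_homD.
by rewrite epq ep eq; case: (bimor_ext_rP x) => -[hD _] _ _; apply: hD.
Qed.

Definition bimor_ext (a : ug_obj GE) : ug_obj GF -> C := cone_ext (bimor_ext_cone^~ a).

Lemma bimor_ext_pos a q : pog_pos q -> bimor_ext a q = bimor_ext_cone q a.
Proof.
by move=> q0; apply: (cone_ext_pos (k := bimor_ext_cone^~ a)) => // *; apply: bimor_ext_coneD.
Qed.

Lemma bimor_ext_biadditive : biadditive bimor_ext.
Proof.
split=> [a|a1 a2 t]; first exact: cone_extD (bimor_ext_coneD a).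
have [[p q] /= [p0 q0 ->]] := pogu_split t.
rewrite /bimor_ext !(cone_extE (bimor_ext_coneD _)) //.
have [[hpD _] _] := bimor_ext_coneP p0; have [[hqD _] _] := bimor_ext_coneP q0.
by rewrite hpD hqD opprD addrACA.
Qed.

Lemma bimor_ext_bipositive : bipositive bimor_ext.
Proof.
move=> a q a0 q0; rewrite bimor_ext_pos //.
by case: (bimor_ext_coneP q0) => -[_ hP] _; apply: hP.
Qed.

Lemma bimor_ext_eta x y : bimor_ext (eE x) (eF y) = b x y.
Proof.
have y0 := gamma_hom_ge0 (ug_etaP GF) y.
by rewrite bimor_ext_pos // (bimor_ext_coneP y0).2; case: (bimor_ext_rP x).
Qed.

Lemma bimor_ext_unit : bimor_ext pg_unit pg_unit = w.
Proof.
have u0 := pogu_unit_pos (ug_obj GF).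
rewrite bimor_ext_pos // -[in bimor_ext_cone _ _](gamma_hom1 (ug_etaP GE)).
rewrite (bimor_ext_coneP u0).2.
by case: (bimor_ext_rP ea_one) => _ -> _; case: hb.
Qed.

Lemma ug_tensor_lift (P : pogu_tensor (ug_obj GE) (ug_obj GF)) :
  exists h : pt_obj P -> C,
    [/\ pog_hom h, h pg_unit = w & forall x y, h (pt_map P (eE x) (eF y)) = b x y].
Proof.
have [h [hh he]] := pt_lift P bimor_ext_biadditive bimor_ext_bipositive.
exists h; split=> //; first by rewrite (pt_unit P) he bimor_ext_unit.
by move=> x y; rewrite he bimor_ext_eta.
Qed.

End BimorphismExtension.

Lemma eps_hom (G2 : univ_group EA2) : pogu_hom (A := Zu) (eps G2).
Proof.
split=> //; split=> [x y|[n|n] //= _]; first exact: mulrzDr.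
exact/pog_posMn/pogu_unit_pos.
Qed.

Lemma ug_eta2 (G2 : univ_group EA2) (b : bool) : ug_eta G2 b = eps G2 b.
Proof.
case: b; first by rewrite /eps (gamma_hom1 (ug_etaP G2)).
apply: (@addrI _ (ug_eta G2 false)); rewrite /eps addr0.
exact/esym/(gamma_homD (ug_etaP G2) (c := false)).
Qed.

Lemma epsilon_okP : epsilon_ok.
Proof.
move=> G2.
have two_gamma : gamma_hom (B := Zpog) 1 (fun b : EA2 => b%:Z).
  apply: (gamma_hom_of_additive (B := Zpog) (phi := fun b : EA2 => b%:Z)) => [[]|] //.
  by case=> -[] [] //= [<-].
have [g [gh g1 ge]] := ug_lift G2 two_gamma.
split; last by move=> f [[fD _] f1] z; rewrite (addf_int fD) f1.
split; first exact: eps_hom.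
exists g; split=> //; split=> [z|t].
  by rewrite /eps (addfMz gh.1) g1 -[1 *~ z]/(z%:~R) intz.
apply: (@ug_ext _ _ _ (eps G2 \o g) id) => //.
  exact: pog_hom_comp gh (eps_hom G2).1.
by move=> b /=; rewrite ge ug_eta2.
Qed.

Lemma pt_map_eta_gamma_bimor (E F : effect_algebra) (GE : univ_group E)
    (GF : univ_group F) (P : pogu_tensor (ug_obj GE) (ug_obj GF)) :
  gamma_bimor pg_unit (fun x y => pt_map P (ug_eta GE x) (ug_eta GF y)).
Proof.
have [etaE etaF] := (ug_etaP GE, ug_etaP GF); split.
- by move=> x y; apply: pt_map_pos; [exact: gamma_hom_ge0 etaE x|exact: gamma_hom_ge0 etaF y].
- by move=> x y1 y2 y /(gamma_homD etaF) ->; rewrite pt_mapDr.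
- by move=> y x1 x2 x /(gamma_homD etaE) ->; rewrite pt_mapDl.
- by rewrite (gamma_hom1 etaE) (gamma_hom1 etaF) (pt_unit P).
Qed.

Lemma mu_iso_okP : mu_iso_ok.
Proof.
move=> E F T GE GF GT P.
have etaT := ug_etaP GT.
have [m [m_hom m1 me]] := ug_tensor_lift (gamma_hom_tensor etaT) P.
have mu : is_mu m by [].
have [phi [phih phie]] := ea_tensor_gamma_lift T (pt_map_eta_gamma_bimor P).
have [n [nh n1 ne]] := ug_lift GT phih.
have m_phi : forall t, m (phi t) = ug_eta GT t.
  apply: (ea_tensor_gamma_ext (w := pg_unit)) => [||x y] //.
    by rewrite -m1; apply: gamma_hom_comp.
  by rewrite phie me.
exists m; split=> //; split; last first.
  by move=> m' [[m'h _] m'e]; apply: ug_tensor_ext => // x y; rewrite m'e me.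
split=> //; exists n; split=> //; split=> t.
- apply: (@ug_tensor_ext _ _ _ _ _ _ (n \o m) id) => //; first exact: pog_hom_comp.
  by move=> x y /=; rewrite me ne phie.
- apply: (@ug_ext _ _ _ (m \o n) id) => //; first exact: pog_hom_comp.
  by move=> x /=; rewrite ne m_phi.
Qed.

Lemma mu_naturalP : mu_natural.
Proof.
move=> E E' F F' f g _ _ T T' GE GE' GF GF' GT GT' P P' fg Gf Gg Gfg k m m'
  [_ fge] [_ Gfe] [_ Gge] [Gfgh Gfge] [kh ke] [mh me] [m'h m'e].
apply: ug_tensor_ext; [exact: pog_hom_comp mh.1 Gfgh.1|exact: pog_hom_comp kh.1 m'h.1|].
by move=> x y /=; rewrite me Gfge fge ke Gfe Gge m'e.
Qed.

Lemma mu_assocP : mu_assoc.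
Proof.
move=> E F H TEF TFH TL TR GE GF GH GEF GFH GL GR PEF PFH PL PR QL QR alpha Galpha alphaP
  mEF mFH mL mR k1 k2 _ alphae [Galphah Galphae] alphaPh alphaPe [mEFh mEFe] [mFHh mFHe]
  [mLh mLe] [mRh mRe] [k1h k1e] [k2h k2e].
have hL := pog_hom_comp k1h.1 (pog_hom_comp mLh.1 Galphah.1).
have hR := pog_hom_comp alphaPh.1 (pog_hom_comp k2h.1 mRh.1).
apply: (pt_ext_r hL hR) => p z.
have z0 := gamma_hom_ge0 (ug_etaP GH) z.
apply: (@ug_tensor_ext _ _ _ _ _ _ (fun p => _ (pt_map QL p _)) (fun p => _ (pt_map QL p _))).
- exact: pt_hom_l hL z0.
- exact: pt_hom_l hR z0.
by move=> x y /=; rewrite k1e mEFe mLe Galphae alphae alphaPe k2e mFHe mRe.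
Qed.

Lemma pt_ext_Zl (F : effect_algebra) (G : univ_group F) (P : pogu_tensor Zu (ug_obj G))
    (C : pog) (h1 h2 : pt_obj P -> C) : pog_hom h1 -> pog_hom h2 ->
  (forall y, h1 (pt_map P 1 (ug_eta G y)) = h2 (pt_map P 1 (ug_eta G y))) -> h1 =1 h2.
Proof.
move=> [h1D h1P] [h2D h2P] e; apply: pt_ext_r => // n y.
rewrite (addf_int (g := fun n => h1 (pt_map P n _))) => [|n1 n2];
  last by rewrite pt_mapDl h1D.
rewrite (addf_int (g := fun n => h2 (pt_map P n _))) => [|n1 n2];
  last by rewrite pt_mapDl h2D.
by rewrite /= e.
Qed.

Lemma pt_ext_Zr (E : effect_algebra) (G : univ_group E) (P : pogu_tensor (ug_obj G) Zu)
    (C : pog) (h1 h2 : pt_obj P -> C) : pog_hom h1 -> pog_hom h2 ->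
  (forall x, h1 (pt_map P (ug_eta G x) 1) = h2 (pt_map P (ug_eta G x) 1)) -> h1 =1 h2.
Proof.
move=> [h1D h1P] [h2D h2P] e; apply: pt_ext_l => // x n.
rewrite (addf_int (g := fun n => h1 (pt_map P _ n))) => [|n1 n2];
  last by rewrite pt_mapDr h1D.
rewrite (addf_int (g := fun n => h2 (pt_map P _ n))) => [|n1 n2];
  last by rewrite pt_mapDr h2D.
by rewrite /= e.
Qed.

Lemma mu_left_unitP : mu_left_unit.
Proof.
move=> E T G2 GE GT P Q lam Glam lamP m k _ lame [Glamh Glame] lamPh lamPe
  [mh me] [kh ke].
apply: (pt_ext_Zl (pog_hom_comp kh.1 (pog_hom_comp mh.1 Glamh.1)) lamPh.1) => y /=.
by rewrite ke -[eps G2 1]/(eps G2 true) -ug_eta2 me Glame lame lamPe.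
Qed.

Lemma mu_right_unitP : mu_right_unit.
Proof.
move=> E T G2 GE GT P Q rho Grho rhoP m k _ rhoe [Grhoh Grhoe] rhoPh rhoPe
  [mh me] [kh ke].
apply: (pt_ext_Zr (pog_hom_comp kh.1 (pog_hom_comp mh.1 Grhoh.1)) rhoPh.1) => x /=.
by rewrite ke -[eps G2 1]/(eps G2 true) -ug_eta2 me Grhoe rhoe rhoPe.
Qed.

Theorem theorem6p5 :
  epsilon_ok /\ mu_iso_ok /\ mu_natural /\ mu_assoc /\ mu_left_unit /\ mu_right_unit.
Proof.
split; first exact: epsilon_okP.
split; first exact: mu_iso_okP.
split; first exact: mu_naturalP.
split; first exact: mu_assocP.
split; first exact: mu_left_unitP.
exact: mu_right_unitP.
Qed.
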